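(* Consider a mean field game with finite state space $\mathcal{S}$, finite action space $\mathcal{A}$, transition rates $Q_{ija}(m)$, rewards $r_{ia}(m)$ and discount factor $\beta\in(0,1)$ satisfying the standing assumptions in the context. Let $\bar m\in\mathcal{P}(\mathcal{S})$ and let $d$ be a deterministic stationary strategy with $\mathcal{D}(\bar m)=\{d\}$. Then there is $\epsilon>0$ such that $\mathcal{D}(m')=\{d\}$ for all $m'\in\mathcal{P}(\mathcal{S})$ with $\|m'-\bar m\|<\epsilon$.
   Context: $\mathcal{S}=\{1,\dots,S\}$, $\mathcal{A}=\{1,\dots,A\}$, $\mathcal{P}(\mathcal{S})$ is the probability simplex in $\mathbb{R}^S$. For each $a$ and $m$, $(Q_{ija}(m))_{i,j}$ is a conservative generator ($Q_{ija}(m)\ge0$ for $i\neq j$, rows sum to $0$); each $m\mapsto Q_{ija}(m)$ is Lipschitz continuous and each $m\mapsto r_{ia}(m)$ is continuous on $\mathcal{P}(\mathcal{S})$. A deterministic stationary strategy is a map $d:\mathcal{S}\to\mathcal{A}$. For fixed $m$, $V^\ast(m)\in\mathbb{R}^S$ is the unique solution of $\beta V_i=\max_{a}\{r_{ia}(m)+\sum_jQ_{ija}(m)V_j\}$ (the optimal value of the discounted continuous-time MDP with constant rates $Q_{ija}(m)$ and rewards $r_{ia}(m)$). $O_i(m)=\operatorname{argmax}_{a}\{r_{ia}(m)+\sum_jQ_{ija}(m)V^\ast_j(m)\}$ and $\mathcal{D}(m)=\{d:\mathcal{S}\to\mathcal{A}: d(i)\in O_i(m)\ \forall i\}$. *)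

From HB Require Import structures.
From mathcomp Require Import all_boot all_order all_algebra.
From mathcomp Require Import all_classical all_reals all_analysis.
Set Implicit Arguments. Unset Strict Implicit. Unset Printing Implicit Defensive.
Import Order.TTheory GRing.Theory Num.Theory.
Import numFieldNormedType.Exports.
Local Open Scope classical_set_scope.
Local Open Scope ring_scope.

Section MFG.
Variables (R : realType) (nS nA : nat).

Definition simplex : set 'rV[R]_nS :=
  [set m | (forall i, 0 <= m ord0 i) /\ \sum_(i < nS) m ord0 i = 1].

Variables (Q : 'I_nS -> 'I_nS -> 'I_nA -> 'rV[R]_nS -> R)
          (r : 'I_nS -> 'I_nA -> 'rV[R]_nS -> R) (beta : R).

Definition bellman_term (m : 'rV[R]_nS) (V : 'I_nS -> R) (i : 'I_nS) (a : 'I_nA) : R :=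
  r i a m + \sum_(j < nS) Q i j a m * V j.

Definition is_bellman_solution (m : 'rV[R]_nS) (V : 'I_nS -> R) : Prop :=
  forall i, (exists a, beta * V i = bellman_term m V i a) /\
            (forall a, bellman_term m V i a <= beta * V i).

(* V*(m): the (unique) solution of the Bellman equation *)
Definition Vstar (m : 'rV[R]_nS) : 'I_nS -> R :=
  xget (fun _ => 0) [set V | is_bellman_solution m V].

Definition Oset (m : 'rV[R]_nS) (i : 'I_nS) : set 'I_nA :=
  [set a | forall b, bellman_term m (Vstar m) i b <= bellman_term m (Vstar m) i a].

Definition Dset (m : 'rV[R]_nS) : set ('I_nS -> 'I_nA) :=
  [set d | forall i, Oset m i (d i)].

Definition conservative_generators : Prop :=
  forall a m, simplex m ->
    (forall i j, i != j -> 0 <= Q i j a m) /\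
    (forall i, \sum_(j < nS) Q i j a m = 0).

Definition Q_lipschitz : Prop :=
  forall i j a, exists L : R, forall m m', simplex m -> simplex m' ->
    `|Q i j a m - Q i j a m'| <= L * `|m - m'|.

Definition r_continuous : Prop :=
  forall i a, {within simplex, continuous (r i a)}.

End MFG.

From HB Require Import structures.
From mathcomp Require Import all_boot all_order all_algebra.
From mathcomp Require Import all_classical all_reals all_analysis.
From mathcomp Require Import lra.
Import Order.TTheory GRing.Theory Num.Theory.
Import numFieldNormedType.Exports.
Local Open Scope classical_set_scope.
Local Open Scope ring_scope.
Set Implicit Arguments. Unset Strict Implicit.

(* For a policy p, the value V^p(m) solves the linear system
   (beta - G_p(m)) V = r_p(m), with G_p(m) a conservative generator.  The
   operator beta - G satisfies a maximum principle, which yields uniqueness of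
   Bellman solutions, their existence by policy improvement, and the bound
   beta * |V_j| <= max_i |((beta - G) V)_i|.  If d is the unique optimal policy
   at mbar, every other action is strictly worse there.  By the bound and the
   continuity of Q and r, V^d(m) -> V^d(mbar) as m -> mbar, so these strict
   inequalities persist near mbar; then V^d(m) solves the Bellman equation at
   m and d is its only greedy policy. *)

Definition discounted_gen (R : realType) (n : nat) (beta : R)
    (G : 'I_n -> 'I_n -> R) (W : 'I_n -> R) (i : 'I_n) : R :=
  beta * W i - \sum_(j < n) G i j * W j.

Section DiscountedGenerator.
Variables (R : realType) (n : nat) (beta : R) (G : 'I_n -> 'I_n -> R).
Hypothesis beta_gt0 : 0 < beta.
Hypothesis G_offdiag_ge0 : forall i j, i != j -> 0 <= G i j.
Hypothesis G_rowsum0 : forall i, \sum_(j < n) G i j = 0.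

Local Notation L := (discounted_gen beta G).

Lemma discounted_genB (W V : 'I_n -> R) i :
  L (fun j => W j - V j) i = L W i - L V i.
Proof.
rewrite /discounted_gen.
have -> : \sum_(j < n) G i j * (W j - V j) =
          \sum_(j < n) G i j * W j - \sum_(j < n) G i j * V j.
  by rewrite -sumrB; apply: eq_bigr => j _; rewrite mulrBr.
lra.
Qed.

Lemma discounted_genN (W : 'I_n -> R) i : L (fun j => - W j) i = - L W i.
Proof.
rewrite /discounted_gen.
have -> : \sum_(j < n) G i j * - W j = - \sum_(j < n) G i j * W j.
  by rewrite -sumrN; apply: eq_bigr => j _; rewrite mulrN.
lra.
Qed.

Lemma discounted_gen_max_principle (W : 'I_n -> R) e :
  (forall i, L W i <= e) -> forall i, beta * W i <= e.
Proof.
move=> LW_le i.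
have [k _ W_le] := @arg_maxP _ R _ i xpredT W isT.
have GW_le0 : \sum_(j < n) G k j * W j <= 0.
  have -> : \sum_(j < n) G k j * W j = \sum_(j < n) G k j * (W j - W k).
    under [RHS]eq_bigr do rewrite mulrBr.
    by rewrite sumrB -mulr_suml G_rowsum0 mul0r subr0.
  apply: sumr_le0 => j _.
  have [->|j_neq_k] := eqVneq j k; first by rewrite subrr mulr0.
  apply: mulr_ge0_le0; first by rewrite G_offdiag_ge0 // eq_sym j_neq_k.
  by rewrite subr_le0; exact: W_le.
have := LW_le k; rewrite /discounted_gen.
have : beta * W i <= beta * W k by rewrite ler_pM2l //; exact: W_le.
lra.
Qed.

Lemma discounted_gen_min_principle (W : 'I_n -> R) e :
  (forall i, e <= L W i) -> forall i, e <= beta * W i.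
Proof.
move=> LW_ge i; rewrite -lerN2 -mulrN.
apply: (discounted_gen_max_principle (W := fun j => - W j)) => k.
by rewrite discounted_genN lerN2.
Qed.

Lemma discounted_gen_norm_bound (W : 'I_n -> R) e :
  (forall i, `|L W i| <= e) -> forall i, beta * `|W i| <= e.
Proof.
move=> LW_le i; rewrite -(gtr0_norm beta_gt0) -normrM ler_norml.
rewrite discounted_gen_max_principle => [|k]; last exact: ler_normlW.
by rewrite discounted_gen_min_principle // => k; exact: lerNnormlW.
Qed.

(* At a zero of a nonnegative W, (G W)_i has only nonnegative terms. *)
Lemma discounted_gen_gt0 (W : 'I_n -> R) i :
  (forall j, 0 <= W j) -> 0 < L W i -> 0 < W i.
Proof.
move=> W_ge0; rewrite [0 < W i]lt0r W_ge0 andbT; apply: contraTneq => Wi0.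
rewrite /discounted_gen Wi0 mulr0 sub0r (bigD1 i) //= Wi0 mulr0 add0r.
rewrite -leNgt oppr_le0; apply: sumr_ge0 => j ji.
by rewrite mulr_ge0 // G_offdiag_ge0 // eq_sym.
Qed.

Lemma discounted_gen_surjective (b : 'I_n -> R) :
  exists W : 'I_n -> R, forall i, L W i = b i.
Proof.
pose B : 'M[R]_n := beta%:M - \matrix_(j, i) G i j.
have BE (x : 'rV[R]_n) i : (x *m B) ord0 i = L (fun j => x ord0 j) i.
  rewrite /B mulmxBr mul_mx_scalar !mxE; congr (_ - _).
  by apply: eq_bigr => j _; rewrite mxE mulrC.
have B_unit : B \in unitmx.
  rewrite unitmxE unitfE; apply/negP => /det0P [v /negP v_neq0 vB0].
  apply: v_neq0; apply/eqP/rowP => j; rewrite mxE.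
  have Lv0 i : L (fun j => v ord0 j) i = 0 by rewrite -BE vB0 mxE.
  have le0 : beta * v ord0 j <= 0.
    by apply: (discounted_gen_max_principle (W := v ord0)) => i; rewrite Lv0.
  have ge0 : 0 <= beta * v ord0 j.
    by apply: (discounted_gen_min_principle (W := v ord0)) => i; rewrite Lv0.
  apply/eqP; rewrite eq_le -(pmulr_rle0 _ beta_gt0) le0.
  by rewrite -(pmulr_rge0 _ beta_gt0).
exists (fun j => ((\row_i b i) *m invmx B) ord0 j) => i.
by rewrite -BE -mulmxA mulVmx // mulmx1 mxE.
Qed.

End DiscountedGenerator.

Lemma near_within_normP (R : realType) (V : normedModType R) (A : set V) (x : V)
    (P : V -> Prop) :
  (\forall y \near within A (nbhs x), P y) ->
  exists eps : R, 0 < eps /\ forall y, A y -> `|y - x| < eps -> P y.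
Proof.
rewrite near_withinE => /nbhs_normP [eps /= eps_gt0 near_P].
by exists eps; split => // y Ay xy; apply: near_P; rewrite //= distrC.
Qed.

Section MeanFieldGame.
Variables (R : realType) (nS nA : nat)
  (Q : 'I_nS -> 'I_nS -> 'I_nA -> 'rV[R]_nS -> R)
  (r : 'I_nS -> 'I_nA -> 'rV[R]_nS -> R) (beta : R).
Hypothesis beta_gt0 : 0 < beta.
Hypothesis Q_generator : conservative_generators Q.

Local Notation bt := (bellman_term Q r).
Local Notation bellman := (is_bellman_solution Q r beta).

Definition policy_generator (m : 'rV[R]_nS) (p : 'I_nS -> 'I_nA)
    (i j : 'I_nS) : R :=
  Q i j (p i) m.

(* Only meaningful for [simplex m]; elsewhere the system may be unsolvable and
   [xget] returns the junk value 0. *)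
Definition policy_value (m : 'rV[R]_nS) (p : 'I_nS -> 'I_nA) : 'I_nS -> R :=
  xget (fun=> 0) [set V | forall i, beta * V i = bt m V i (p i)].

Lemma policy_generator_offdiag_ge0 m p : simplex m ->
  forall i j, i != j -> 0 <= policy_generator m p i j.
Proof. by move=> m_simplex i j; apply: (Q_generator (p i) m_simplex).1. Qed.

Lemma policy_generator_rowsum0 m p : simplex m ->
  forall i, \sum_(j < nS) policy_generator m p i j = 0.
Proof. by move=> m_simplex i; apply: (Q_generator (p i) m_simplex).2. Qed.

Lemma discounted_gen_policy m p V i :
  discounted_gen beta (policy_generator m p) V i =
  beta * V i - bt m V i (p i) + r i (p i) m.
Proof. by rewrite /discounted_gen /bellman_term /policy_generator; lra. Qed.

Lemma policy_valueP m p : simplex m ->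
  forall i, beta * policy_value m p i = bt m (policy_value m p) i (p i).
Proof.
move=> m_simplex.
apply: (@xgetPex _ (fun=> 0) [set V | forall i, beta * V i = bt m V i (p i)]).
have [V LV] := discounted_gen_surjective beta_gt0
  (policy_generator_offdiag_ge0 p m_simplex)
  (policy_generator_rowsum0 p m_simplex) (fun i => r i (p i) m).
by exists V => i; have := LV i; rewrite discounted_gen_policy /=; lra.
Qed.

Lemma bellman_solution_le m V W : simplex m -> bellman m V -> bellman m W ->
  forall i, V i <= W i.
Proof.
move=> m_simplex V_bellman W_bellman.
have [p p_greedy] := choice (fun i => (V_bellman i).1).
have LVW_le0 i :
    discounted_gen beta (policy_generator m p) (fun j => V j - W j) i <= 0.
  rewrite discounted_genB !discounted_gen_policy -p_greedy.
  have := (W_bellman i).2 (p i); lra.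
move=> i; rewrite -subr_le0 -(pmulr_rle0 _ beta_gt0).
exact: (discounted_gen_max_principle beta_gt0
  (policy_generator_offdiag_ge0 p m_simplex)
  (policy_generator_rowsum0 p m_simplex) LVW_le0).
Qed.

Lemma VstarE m V : simplex m -> bellman m V -> Vstar Q r beta m = V.
Proof.
move=> m_simplex V_bellman.
have Vstar_bellman : bellman m (Vstar Q r beta m).
  exact: (xgetPex (fun=> 0) (ex_intro _ V V_bellman)).
apply: funext => i; apply/eqP; rewrite eq_le.
by rewrite !(bellman_solution_le m_simplex).
Qed.

Lemma policy_improvement m p V i : simplex m ->
  (forall k, beta * V k <= bt m V k (p k)) -> beta * V i < bt m V i (p i) ->
  \sum_(k < nS) V k < \sum_(k < nS) policy_value m p k.
Proof.
move=> m_simplex V_le V_lt.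
pose W k := policy_value m p k - V k.
have LW k : discounted_gen beta (policy_generator m p) W k =
    bt m V k (p k) - beta * V k.
  by rewrite discounted_genB !discounted_gen_policy policy_valueP //; lra.
have [G_ge0 G_sum0] := (policy_generator_offdiag_ge0 p m_simplex,
  policy_generator_rowsum0 p m_simplex).
have W_ge0 k : 0 <= W k.
  rewrite -(pmulr_rge0 _ beta_gt0).
  by apply: (discounted_gen_min_principle beta_gt0 G_ge0 G_sum0 (W := W)) => j;
    rewrite LW subr_ge0.
have W_gt0 : 0 < W i.
  apply: (discounted_gen_gt0 (beta := beta) G_ge0 W_ge0).
  by rewrite LW subr_gt0.
rewrite -subr_gt0 -sumrB (bigD1 i) //=; apply: (lt_le_trans W_gt0).
by rewrite lerDl sumr_ge0 // => k _; apply: W_ge0.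
Qed.

(* A policy of maximal total value admits no improving action. *)
Lemma bellman_solution_exists m (p0 : 'I_nS -> 'I_nA) : simplex m ->
  exists V, bellman m V.
Proof.
move=> m_simplex.
have [p _ p_max] := @arg_maxP _ R {ffun 'I_nS -> 'I_nA} (finfun p0) xpredT
  (fun p => \sum_(k < nS) policy_value m p k) isT.
exists (policy_value m p) => i; split.
  by exists (p i); apply: policy_valueP.
move=> a; rewrite leNgt; apply/negP => improves.
pose p' := [ffun k => if k == i then a else p k].
have p'i : p' i = a by rewrite ffunE eqxx.
suff : \sum_(k < nS) policy_value m p k < \sum_(k < nS) policy_value m p' k.
  by apply/negP; rewrite -leNgt; exact: p_max.
apply: (policy_improvement (i := i)) => [//|k|]; last by rewrite p'i.
rewrite ffunE; case: eqP => [->|_]; first exact: ltW.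
by rewrite policy_valueP.
Qed.

Lemma bellman_greedy m V i a : bellman m V ->
  (forall b, bt m V i b <= bt m V i a) -> beta * V i = bt m V i a.
Proof.
move=> V_bellman a_max; have [[b Vb] V_ge] := V_bellman i.
by apply/eqP; rewrite eq_le V_ge Vb a_max.
Qed.

Lemma Dset_singleton_gap m V d : simplex m -> bellman m V ->
  Dset Q r beta m = [set d] ->
  forall i b, b != d i -> bt m V i b < bt m V i (d i).
Proof.
move=> m_simplex V_bellman Dm i b; rewrite ltNge; apply: contraNN => d_le_b.
have d_opt : Dset Q r beta m d by rewrite Dm.
rewrite /Dset /Oset (VstarE m_simplex V_bellman) in d_opt.
pose d' k := if k == i then b else d k.
have : Dset Q r beta m d'.
  move=> k; rewrite /Oset (VstarE m_simplex V_bellman) /d'.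
  case: eqP => [-> c|_]; last exact: d_opt.
  exact: le_trans (d_opt i c) d_le_b.
by rewrite Dm => /(congr1 (fun f => f i)); rewrite /d' eqxx => ->.
Qed.

Lemma Dset_eq_singleton m V d : simplex m ->
  (forall i, beta * V i = bt m V i (d i)) ->
  (forall i b, b != d i -> bt m V i b < bt m V i (d i)) ->
  Dset Q r beta m = [set d].
Proof.
move=> m_simplex V_eq gap.
have d_greedy i b : bt m V i b <= bt m V i (d i).
  by have [->|/gap/ltW] := eqVneq b (d i).
have V_bellman : bellman m V.
  by move=> i; split; [exists (d i) | move=> b; rewrite V_eq].
rewrite /Dset /Oset (VstarE m_simplex V_bellman).
apply/seteqP; split => [f /= f_opt|_ -> //]; apply: funext => i.
by apply: contraTeq (f_opt i (d i)) => /gap; rewrite ltNge.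
Qed.

Variable mbar : 'rV[R]_nS.
Hypothesis mbar_simplex : simplex mbar.
Hypothesis Q_lip : Q_lipschitz Q.
Hypothesis r_cont : r_continuous r.

Local Notation F := (within (@simplex R nS) (nbhs mbar)).

Lemma Q_cvg i j a : Q i j a m @[m --> F] --> Q i j a mbar.
Proof.
have [L Q_ija_lip] := Q_lip i j a.
apply/cvgrPdist_le => e e_gt0; rewrite near_withinE.
apply/(@nbhs_normP R 'rV[R]_nS).
have L1_gt0 : 0 < `|L| + 1 by rewrite ltr_wpDl.
exists (e / (`|L| + 1)) => [|m /= m_near m_simplex]; first exact: divr_gt0.
apply: le_trans (Q_ija_lip _ _ mbar_simplex m_simplex) _.
rewrite ltr_pdivlMr // in m_near.
have : L <= `|L| := ler_norm L.
have := normr_ge0 (mbar - m); nra.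
Qed.

Lemma r_cvg i a : r i a m @[m --> F] --> r i a mbar.
Proof.
have := (subspace_continuousP (@simplex R nS) (r i a)).1 (@r_cont i a).
exact.
Qed.

Lemma bellman_term_cvg (V : 'rV[R]_nS -> 'I_nS -> R) (Vbar : 'I_nS -> R) i a :
  (forall j, V m j @[m --> F] --> Vbar j) ->
  bt m (V m) i a @[m --> F] --> bt mbar Vbar i a.
Proof.
move=> V_cvg; apply: cvgD; first exact: r_cvg.
apply: (cvg_big add_continuous) => j _.
by apply: cvgM; [exact: Q_cvg | exact: V_cvg].
Qed.

Lemma bellman_term_lt_near (V : 'rV[R]_nS -> 'I_nS -> R) (Vbar : 'I_nS -> R)
    i a b :
  (forall j, V m j @[m --> F] --> Vbar j) ->
  bt mbar Vbar i b < bt mbar Vbar i a ->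
  \forall m \near F, bt m (V m) i b < bt m (V m) i a.
Proof.
move=> V_cvg; rewrite -subr_gt0 => gap_gt0.
have gap_cvg : bt m (V m) i a - bt m (V m) i b @[m --> F] -->
    bt mbar Vbar i a - bt mbar Vbar i b.
  by apply: cvgB; apply: bellman_term_cvg.
by apply: filterS (cvgr_gt _ gap_cvg 0 gap_gt0) => m; rewrite subr_gt0.
Qed.

Lemma policy_value_cvg p Vbar :
  (forall i, beta * Vbar i = bt mbar Vbar i (p i)) ->
  forall j, policy_value m p j @[m --> F] --> Vbar j.
Proof.
move=> Vbar_eq j; apply/cvgrPdist_le => e e_gt0.
have bt_near i :
    \forall m \near F, `|bt mbar Vbar i (p i) - bt m Vbar i (p i)| <= beta * e.
  have bt_cvg : bt m Vbar i (p i) @[m --> F] --> bt mbar Vbar i (p i).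
    by apply: bellman_term_cvg => k; apply: cvg_cst.
  by move/cvgrPdist_le : bt_cvg; apply; rewrite mulr_gt0.
have m_simplex : \forall m \near F, simplex m by apply: withinT.
apply: filterS2 m_simplex (filter_forall _ bt_near) => m m_simplex bt_le.
have LW i : discounted_gen beta (policy_generator m p)
    (fun k => Vbar k - policy_value m p k) i =
    bt mbar Vbar i (p i) - bt m Vbar i (p i).
  rewrite discounted_genB !discounted_gen_policy -Vbar_eq policy_valueP //.
  lra.
rewrite -(ler_pM2l beta_gt0).
apply: (discounted_gen_norm_bound beta_gt0
  (policy_generator_offdiag_ge0 p m_simplex)
  (policy_generator_rowsum0 p m_simplex) (W := fun k => Vbar k - _)) => i.
by rewrite LW.
Qed.

End MeanFieldGame.

Theorem lemma4p1 (R : realType) (nS nA : nat)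
  (Q : 'I_nS -> 'I_nS -> 'I_nA -> 'rV[R]_nS -> R)
  (r : 'I_nS -> 'I_nA -> 'rV[R]_nS -> R) (beta : R)
  (hbeta : 0 < beta < 1)
  (hQ : conservative_generators Q)
  (hQL : Q_lipschitz Q)
  (hr : r_continuous r)
  (mbar : 'rV[R]_nS) (hmbar : simplex mbar)
  (d : 'I_nS -> 'I_nA)
  (hD : Dset Q r beta mbar = [set d]) :
  exists eps : R, 0 < eps /\
    forall m' : 'rV[R]_nS, simplex m' -> `|m' - mbar| < eps ->
      Dset Q r beta m' = [set d].
Proof.
have beta_gt0 : 0 < beta by case/andP: hbeta.
have [Vb Vb_bellman] := bellman_solution_exists r beta_gt0 hQ d hmbar.
have gap_mbar := Dset_singleton_gap beta_gt0 hQ hmbar Vb_bellman hD.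
have Vb_eq i : beta * Vb i = bellman_term Q r mbar Vb i (d i).
  apply: bellman_greedy Vb_bellman _ => b.
  by have [->|/gap_mbar/ltW] := eqVneq b (d i).
pose Vd m := policy_value Q r beta m d.
have Vd_cvg := policy_value_cvg beta_gt0 hQ hmbar hQL hr Vb_eq.
have gap_near : \forall m \near within (@simplex R nS) (nbhs mbar), forall i b,
    b != d i -> bellman_term Q r m (Vd m) i b < bellman_term Q r m (Vd m) i (d i).
  apply: filter_forall => i; apply: filter_forall => b.
  have [->|b_neq] := eqVneq b (d i); first exact: nearW.
  have := bellman_term_lt_near hmbar hQL hr Vd_cvg (gap_mbar i b b_neq).
  by apply: filterS.
apply: near_within_normP.
have m_simplex : \forall m \near within (@simplex R nS) (nbhs mbar), simplex m.
  exact: withinT.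
apply: filterS2 m_simplex gap_near => m m_simplex gap.
apply: (Dset_eq_singleton beta_gt0 hQ m_simplex _ gap) => i.
exact: policy_valueP.
Qed.
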